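(* Let $G$ be a flattened grammar with start symbol $S$, and let $\mathrm{CPS}(G)$ be its CPS transformation (with respect to an arbitrary fixed choice of CPS-triggering nonterminals), with start symbol $\hat S$. Then $G$ and $\mathrm{CPS}(G)$ generate the same language, i.e. for every $\lambda\in\Sigma^*$, $S\Rightarrow^*\lambda$ in $G$ if and only if $\hat S\Rightarrow^*\lambda$ in $\mathrm{CPS}(G)$.
   Context: BNF grammars and flattening. A BNF grammar over terminals $\Sigma$ is a list of rules $X\to e$, where $X$ is a nonterminal (called top-level) and $e$ is an expression: a single symbol; a concatenation $e_1\cdots e_n$ ($n\ge 0$, the case $n=0$ being $\varepsilon$); an alternation $e_1\mid\cdots\mid e_n$; an optional $e_1?$; or a repetition $e_1^*$. The procedure $\mathrm{Flatten}(X,e)$ emits context-free productions: (i) if $e=\alpha$ is a single symbol, emit $X\to\alpha$; (ii) if $e=e_1\cdots e_n$, for each $i$ let $\alpha_i=e_i$ if $e_i$ is a single symbol, and otherwise let $\alpha_i$ be a fresh nonterminal and call $\mathrm{Flatten}(\alpha_i,e_i)$; emit $X\to\alpha_1\cdots\alpha_n$; (iii) if $e=e_1\mid\cdots\mid e_n$, call $\mathrm{Flatten}(X,e_i)$ for each $i$; (iv) if $e=e_1?$, call $\mathrm{Flatten}(X,e_1\mid\varepsilon)$; (v) if $e=e_1^*$, let $\alpha$ be fresh, call $\mathrm{Flatten}(\alpha,e_1)$ and emit $X\to\alpha X$ and $X\to\varepsilon$. The flattened grammar $G$ consists of all productions emitted by $\mathrm{Flatten}(X,e)$ over all rules $X\to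 e$; its start symbol $S$ is a top-level nonterminal. CPS transformation. A nonterminal is CPS-eligible if it was created as a fresh symbol during flattening. Fix an arbitrary subset of the CPS-eligible nonterminals, called CPS-triggering (terminals and top-level nonterminals are never CPS-triggering). For every nonterminal $Y$ let $\hat Y$ be a new symbol; for a terminal $\sigma$ set $\hat\sigma=\sigma$. Define mutually recursive procedures. $\mathrm{CPSProd}(X\to\alpha_1\cdots\alpha_i\cdot\alpha_{i+1}\cdots\alpha_r,\ \tau)$, where $\tau$ is a string of symbols: if $i=0$, add the production $\hat X\to\tau$ to $\mathrm{CPS}(G)$; if $i>0$ and $\alpha_i$ is not CPS-triggering, call $\mathrm{CPSProd}(X\to\alpha_1\cdots\alpha_{i-1}\cdot\alpha_i\cdots\alpha_r,\ \hat\alpha_i\tau)$; if $i>0$, $\alpha_i$ is CPS-triggering, $i=r$ and $X=\alpha_r$ (i.e. the dotted production has the form $\alpha\to\gamma\alpha\,\cdot$), call $\mathrm{CPSProd}(X\to\alpha_1\cdots\alpha_{r-1}\cdot\alpha_r,\ \hat\alpha_r)$; otherwise ($\alpha_i$ CPS-triggering, not of that form) call $\mathrm{CPSSym}(\alpha_i,\tau)$ and then $\mathrm{CPSProd}(X\to\alpha_1\cdots\alpha_{i-1}\cdot\alpha_i\cdots\alpha_r,\ \hat\alpha_i)$. $\mathrm{CPSSym}(X,\tau)$: for each production $X\to\eta$ of $G$, call $\mathrm{CPSProd}(X\to\eta\,\cdot,\ \tau)$. The grammar $\mathrm{CPS}(G)$ consists of all productions added when $\mathrm{CPSSym}(X,\varepsilon)$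 is called for every non-CPS-triggering nonterminal $X$; its start symbol is $\hat S$. *)

From Stdlib Require Import List Relations.
Import ListNotations.
Set Implicit Arguments.

Inductive symbol (T NT : Type) : Type :=
| Tm (a : T)
| Nt (X : NT).
Arguments Tm {T NT} a.
Arguments Nt {T NT} X.

Definition cfg (T NT : Type) := NT -> list (symbol T NT) -> Prop.

Definition step (T NT : Type) (G : cfg T NT) (u v : list (symbol T NT)) : Prop :=
  exists l r X rhs, G X rhs /\ u = l ++ Nt X :: r /\ v = l ++ rhs ++ r.

Definition derives (T NT : Type) (G : cfg T NT) : relation (list (symbol T NT)) :=
  clos_refl_trans _ (step G).

Inductive expr (T N : Type) : Type :=
| ESym (s : symbol T N)
| ECat (es : list (expr T N))         (* e_1 ... e_n, n >= 0 (n = 0 is epsilon) *)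
| EAlt (es : list (expr T N))
| EOpt (e : expr T N)
| EStar (e : expr T N).
Arguments ESym {T N} s.
Arguments ECat {T N} es.
Arguments EAlt {T N} es.
Arguments EOpt {T N} e.
Arguments EStar {T N} e.

(** Nonterminals of the flattened grammar: top-level ones and fresh ones
    (fresh symbols are numbered by a global counter, hence pairwise distinct
    and distinct from every top-level nonterminal). *)
Inductive nt (N : Type) : Type :=
| Top (x : N)
| Fresh (k : nat).
Arguments Top {N} x.
Arguments Fresh {N} k.

Definition lift_sym (T N : Type) (s : symbol T N) : symbol T (nt N) :=
  match s with Tm a => Tm a | Nt x => Nt (Top x) end.

Definition prod (T N : Type) := (nt N * list (symbol T (nt N)))%type.

(** [flatten X e n] = (productions emitted by Flatten(X, e), next free counter),
    fresh nonterminals being [Fresh n], [Fresh (n+1)], ... *)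
Fixpoint flatten (T N : Type) (X : nt N) (e : expr T N) (n : nat) {struct e}
  : list (prod T N) * nat :=
  match e with
  | ESym s => ([(X, [lift_sym s])], n)
  | ECat es =>
      let fix go (es : list (expr T N)) (n : nat)
          : list (symbol T (nt N)) * list (prod T N) * nat :=
        match es with
        | [] => ([], [], n)
        | e1 :: es' =>
            let '(a, ps1, n1) :=
              match e1 with
              | ESym s => (lift_sym s, [], n)
              | _ => let '(ps, n1) := flatten (Fresh n) e1 (S n) in
                     (Nt (Fresh n), ps, n1)
              end in
            let '(as_, ps2, n2) := go es' n1 in
            (a :: as_, ps1 ++ ps2, n2)
        end in
      let '(alphas, ps, n') := go es n in
      (ps ++ [(X, alphas)], n')
  | EAlt es =>
      let fix go (es : list (expr T N)) (n : nat) : list (prod T N) * nat :=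
        match es with
        | [] => ([], n)
        | e1 :: es' =>
            let '(ps1, n1) := flatten X e1 n in
            let '(ps2, n2) := go es' n1 in
            (ps1 ++ ps2, n2)
        end in
      go es n
  | EOpt e1 =>
      (* Flatten(X, e1 | epsilon) = Flatten(X, e1); Flatten(X, epsilon) *)
      let '(ps, n1) := flatten X e1 n in
      (ps ++ [(X, [])], n1)
  | EStar e1 =>
      let a := Fresh n in
      let '(ps, n1) := flatten a e1 (S n) in
      (ps ++ [(X, [Nt a; Nt X]); (X, [])], n1)
  end.

Fixpoint flatten_rules (T N : Type) (rules : list (N * expr T N)) (n : nat)
  : list (prod T N) * nat :=
  match rules with
  | [] => ([], n)
  | (X, e) :: rs =>
      let '(ps1, n1) := flatten (Top X) e n in
      let '(ps2, n2) := flatten_rules rs n1 in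
      (ps1 ++ ps2, n2)
  end.

Definition flattened (T N : Type) (rules : list (N * expr T N)) : list (prod T N) :=
  fst (flatten_rules rules 0).

Definition flat_cfg (T N : Type) (rules : list (N * expr T N)) : cfg T (nt N) :=
  fun X rhs => In (X, rhs) (flattened rules).

(** CPS-eligible: created as a fresh symbol during flattening. *)
Definition cps_eligible (T N : Type) (rules : list (N * expr T N)) (Y : nt N) : Prop :=
  exists k, Y = Fresh k /\ k < snd (flatten_rules rules 0).

Inductive hat_nt (N : Type) : Type := Hat (Y : nt N).
Arguments Hat {N} Y.

Definition hat_sym (T N : Type) (s : symbol T (nt N)) : symbol T (hat_nt N) :=
  match s with Tm a => Tm a | Nt Y => Nt (Hat Y) end.

Section CPS.
Variables (T N : Type) (G : list (prod T N)) (trig : nt N -> Prop).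

Definition trig_sym (s : symbol T (nt N)) : Prop :=
  match s with Tm _ => False | Nt Y => trig Y end.

(** Calls made by the CPS procedures, started from CPSSym(X, eps) for every
    non-CPS-triggering nonterminal X.
    [ProdCall X pre post tau] : CPSProd(X -> pre . post, tau) is called.
    [SymCall X tau]          : CPSSym(X, tau) is called. *)
Inductive ProdCall : nt N -> list (symbol T (nt N)) -> list (symbol T (nt N)) ->
                     list (symbol T (hat_nt N)) -> Prop :=
| pc_sym : forall X eta tau, SymCall X tau -> In (X, eta) G -> ProdCall X eta [] tau
| pc_nontrig : forall X pre a post tau,
    ProdCall X (pre ++ [a]) post tau -> ~ trig_sym a ->
    ProdCall X pre (a :: post) (hat_sym a :: tau)
| pc_self : forall X pre tau,
    ProdCall X (pre ++ [Nt X]) [] tau -> trig X ->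
    ProdCall X pre [Nt X] [hat_sym (Nt X)]
| pc_trig : forall X pre a post tau,
    ProdCall X (pre ++ [a]) post tau -> trig_sym a ->
    ~ (post = [] /\ a = Nt X) ->
    ProdCall X pre (a :: post) [hat_sym a]
with SymCall : nt N -> list (symbol T (hat_nt N)) -> Prop :=
| sc_root : forall X, ~ trig X -> SymCall X []
| sc_call : forall X pre Y post tau,
    ProdCall X (pre ++ [Nt Y]) post tau -> trig Y ->
    ~ (post = [] /\ Y = X) ->
    SymCall Y tau.

(** CPS(G): the productions \hat X -> tau added by CPSProd(X -> . eta, tau). *)
Definition CPS : cfg T (hat_nt N) :=
  fun hX tau => exists X post, hX = Hat X /\ ProdCall X [] post tau.

End CPS.

From Stdlib Require Import List Relations Classical Lia.
Import ListNotations.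

(** 2. The CPS transformation is proved correct for an arbitrary list of
       productions, provided every triggering nonterminal [Y] has a unique
       call site.  Then CPSSym(Y, te) is called with a unique continuation
       [te], and a call CPSProd(X -> p . q, tau) emits a string [tau] that
       derives exactly "the yield of [q], then the yield of the continuation
       of [X]" (completeness by induction on derivations in [G], soundness by
       well-founded induction on derivation heights in CPS(G)).

    3. Flattening allocates every fresh nonterminal once and uses it at a
       single call site, so its output satisfies the hypothesis of part 2;
       the theorem follows since the start symbol is not fresh. *)

(** Terminal derivations as forests of bounded height.  [yields G n u w]
    says that the sentential form [u] derives the terminal word [w] in [G]
    by derivation trees of height at most [n]; the height is what makes the
    soundness proof of the CPS transformation a well-founded induction. *)
Section Yields.
Context {T NT : Type} (G : cfg T NT).

Inductive yields : nat -> list (symbol T NT) -> list T -> Prop :=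
| yields_nil n : yields n [] []
| yields_tm n a u w : yields n u w -> yields n (Tm a :: u) (a :: w)
| yields_nt n X rhs u w1 w2 : G X rhs -> yields n rhs w1 -> yields (S n) u w2 ->
    yields (S n) (Nt X :: u) (w1 ++ w2).

Lemma yields_mono n u w : yields n u w -> forall m, n <= m -> yields m u w.
Proof.
  induction 1; intros m Hm.
  - constructor.
  - constructor; auto.
  - destruct m as [|m]; [lia|]. econstructor; eauto. apply IHyields1; lia.
Qed.

Lemma yields_app n u1 w1 u2 w2 :
  yields n u1 w1 -> yields n u2 w2 -> yields n (u1 ++ u2) (w1 ++ w2).
Proof.
  induction 1; intros H2; simpl.
  - exact H2.
  - constructor; auto.
  - rewrite <- app_assoc. econstructor; eauto.
Qed.

Lemma yields_app_inv n u1 u2 w : yields n (u1 ++ u2) w ->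
  exists w1 w2, w = w1 ++ w2 /\ yields n u1 w1 /\ yields n u2 w2.
Proof.
  revert w. induction u1 as [|s u1 IH]; intros w H; simpl in *.
  - exists [], w. repeat split; auto. constructor.
  - inversion H; subst;
      match goal with Hu : yields _ (u1 ++ u2) _ |- _ =>
        destruct (IH _ Hu) as (wa & wb & -> & Ha & Hb) end.
    + exists (a :: wa), wb. repeat split; auto. constructor; auto.
    + exists (w1 ++ wa), wb. rewrite app_assoc. repeat split; auto. econstructor; eauto.
Qed.

Lemma yields_nil_inv n w : yields n [] w -> w = [].
Proof. intros H; inversion H; auto. Qed.

Lemma yields_nt_inv n X w : yields n [Nt X] w ->
  exists m rhs, n = S m /\ G X rhs /\ yields m rhs w.
Proof.
  intros H; inversion H; subst.
  match goal with Hu : yields _ [] _ |- _ => apply yields_nil_inv in Hu end.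
  subst. rewrite app_nil_r. eauto.
Qed.

Lemma yields_terminals n w : yields n (map Tm w) w.
Proof. induction w; simpl; constructor; auto. Qed.

Lemma derives_frame l u v r : derives G u v -> derives G (l ++ u ++ r) (l ++ v ++ r).
Proof.
  induction 1 as [u v (l0 & r0 & X & rhs & HG & -> & ->)| |]; [|apply rt_refl|eapply rt_trans; eauto].
  apply rt_step. exists (l ++ l0), (r0 ++ r), X, rhs.
  split; [exact HG|]. rewrite <- !app_assoc. split; reflexivity.
Qed.

Lemma derives_app u u' v v' :
  derives G u u' -> derives G v v' -> derives G (u ++ v) (u' ++ v').
Proof.
  intros Hu Hv. apply rt_trans with (u' ++ v).
  - exact (derives_frame [] u u' v Hu).
  - pose proof (derives_frame u' v v' [] Hv) as H. rewrite !app_nil_r in H. exact H.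
Qed.

Lemma yields_derives n u w : yields n u w -> derives G u (map Tm w).
Proof.
  induction 1; simpl.
  - apply rt_refl.
  - exact (derives_app [Tm a] [Tm a] _ _ (rt_refl _ _ _) IHyields).
  - rewrite map_app. apply rt_trans with (rhs ++ u).
    + apply rt_step. exists [], u, X, rhs. auto.
    + apply derives_app; auto.
Qed.

Lemma derives_yields u w : derives G u (map Tm w) -> exists n, yields n u w.
Proof.
  intros H. apply clos_rt_rt1n in H. remember (map Tm w) as v eqn:Ev.
  induction H as [|u v' v (l & r & X & rhs & HG & -> & ->) _ IH]; subst.
  - exists 0. apply yields_terminals.
  - destruct (IH eq_refl) as [n Hn].
    destruct (yields_app_inv n l _ _ Hn) as (wl & w' & -> & Hl & Hw').
    destruct (yields_app_inv n rhs _ _ Hw') as (wm & wr & -> & Hm & Hr).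
    exists (S n). apply yields_app; [eapply yields_mono; eauto|].
    econstructor; eauto. eapply yields_mono; eauto.
Qed.

Definition generates u w := exists n, yields n u w.

Lemma derives_iff_generates u w : derives G u (map Tm w) <-> generates u w.
Proof.
  split; [apply derives_yields|]. intros [n H]. eapply yields_derives; eauto.
Qed.

Lemma generates_nil : generates [] [].
Proof. exists 0; constructor. Qed.

Lemma generates_tm a u w : generates u w -> generates (Tm a :: u) (a :: w).
Proof. intros [n H]; exists n; constructor; auto. Qed.

Lemma generates_app u1 w1 u2 w2 :
  generates u1 w1 -> generates u2 w2 -> generates (u1 ++ u2) (w1 ++ w2).
Proof.
  intros [n1 H1] [n2 H2]. exists (max n1 n2).
  apply yields_app; eapply yields_mono; eauto; lia.
Qed.

Lemma generates_nt X rhs w : G X rhs -> generates rhs w -> generates [Nt X] w.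
Proof.
  intros HG [n Hn]. exists (S n). rewrite <- (app_nil_r w).
  econstructor; eauto. constructor.
Qed.

End Yields.

Definition cfg_of {T N : Type} (G : list (prod T N)) : cfg T (nt N) :=
  fun X rhs => In (X, rhs) G.

Scheme prodcall_mut := Induction for ProdCall Sort Prop
with symcall_mut := Induction for SymCall Sort Prop.

Section CPSCorrect.
Context {T N : Type} (G : list (prod T N)) (trig : nt N -> Prop).

Lemma prodcall_in X p q tau : ProdCall G trig X p q tau -> In (X, p ++ q) G.
Proof.
  induction 1; rewrite <- ?app_assoc in *; rewrite ?app_nil_r; assumption.
Qed.

Lemma prodcall_symcall X p tau : ProdCall G trig X p [] tau -> SymCall G trig X tau.
Proof. intros H; inversion H; assumption. Qed.

(** Moving the dot one symbol to the left always yields a call as well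
    (the three CPSProd cases are exhaustive, classically). *)
Lemma prodcall_shift X p a q tau :
  ProdCall G trig X (p ++ [a]) q tau -> exists tau', ProdCall G trig X p (a :: q) tau'.
Proof.
  intros H. destruct (classic (trig_sym trig a)) as [Ht|Ht].
  - destruct (classic (q = [] /\ a = Nt X)) as [[-> ->]|Hs].
    + eexists; eapply pc_self; eauto.
    + eexists; eapply pc_trig; eauto.
  - eexists; eapply pc_nontrig; eauto.
Qed.

Lemma prodcall_to_start X p q tau :
  ProdCall G trig X p q tau -> exists sigma, ProdCall G trig X [] (p ++ q) sigma.
Proof.
  revert q tau. induction p as [|a p IH] using rev_ind; intros q tau H; [eauto|].
  destruct (prodcall_shift X p a q tau H) as [tau' H'].
  rewrite <- app_assoc. exact (IH _ _ H').
Qed.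

Lemma cps_rule_of_symcall X te rhs :
  SymCall G trig X te -> In (X, rhs) G ->
  exists sigma, CPS G trig (Hat X) sigma /\ ProdCall G trig X [] rhs sigma.
Proof.
  intros Hs Hin. destruct (prodcall_to_start X rhs [] te (pc_sym rhs Hs Hin)) as [sg Hsg].
  rewrite app_nil_r in Hsg. exists sg. split; [exists X, rhs|]; auto.
Qed.

Lemma prodcall_cons_inv X p a q tau : ProdCall G trig X p (a :: q) tau ->
  exists tau', ProdCall G trig X (p ++ [a]) q tau' /\
   ((~ trig_sym trig a /\ tau = hat_sym a :: tau') \/
    (exists Z, a = Nt Z /\ trig Z /\ tau = [hat_sym a] /\ SymCall G trig Z tau')).
Proof.
  intros H; inversion H; subst; eexists; split; eauto.
  - right. exists X. eauto using prodcall_symcall.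
  - right. destruct a as [b|Z]; [contradiction|]. exists Z. repeat split; auto.
    eapply sc_call; eauto. intros [-> ->]; auto.
Qed.

Definition unique_call_sites : Prop :=
  forall Y X1 p1 q1 X2 p2 q2, trig Y ->
    In (X1, p1 ++ Nt Y :: q1) G -> In (X2, p2 ++ Nt Y :: q2) G ->
    ~ (q1 = [] /\ Y = X1) -> ~ (q2 = [] /\ Y = X2) ->
    X1 = X2 /\ p1 = p2 /\ q1 = q2.

Hypothesis unique_sites : unique_call_sites.

(** By mutual
    induction, the two calls being compared are always made by the same
    CPSProd case. *)
Lemma symcall_functional Y t1 t2 :
  SymCall G trig Y t1 -> SymCall G trig Y t2 -> t1 = t2.
Proof.
  intros H. revert t2.
  induction H as
    [X eta tau Hs IH Hin | X pre a post tau Hp IH Hn | X pre tau Hp IH Ht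
    | X pre a post tau Hp IH Ht Hself | X Hn | X pre Z post tau Hp IH Ht Hself]
    using symcall_mut with
    (P := fun X p q t1 _ => forall t2, ProdCall G trig X p q t2 -> t1 = t2);
    intros t2 H2; inversion H2; subst; auto.
  - f_equal; auto.
  - exfalso; apply Hn; simpl; auto.
  - contradiction.
  - match goal with Hn' : ~ trig_sym _ _ |- _ => exfalso; apply Hn'; exact Ht end.
  - contradiction.
  - contradiction.
  - contradiction.
  - match goal with Hq : ProdCall _ _ ?X2 _ ?q2 t2, Hs2 : ~ (?q2 = [] /\ Z = ?X2) |- _ =>
      pose proof (prodcall_in _ _ _ _ Hp) as Hp'; pose proof (prodcall_in _ _ _ _ Hq) as Hq';
      rewrite <- app_assoc in Hp', Hq';
      destruct (unique_sites _ _ _ _ _ _ _ Ht Hp' Hq' Hself Hs2) as (-> & -> & ->) end.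
    auto.
Qed.

Lemma cps_complete n u w : yields (cfg_of G) n u w ->
  forall X p tau te we, ProdCall G trig X p u tau -> SymCall G trig X te ->
  generates (CPS G trig) te we -> generates (CPS G trig) tau (w ++ we).
Proof.
  induction 1 as [n | n b u w Hu IH | n Y rhs u w1 w2 Hrhs Hw1 IH1 Hu IH2];
    intros X p tau te we Hpc Hte Hwe.
  - rewrite (symcall_functional X tau te (prodcall_symcall _ _ _ Hpc) Hte). exact Hwe.
  - destruct (prodcall_cons_inv _ _ _ _ _ Hpc) as (tau' & Hpc' & [[_ ->]|(Z & [=] & _)]).
    apply generates_tm. eapply IH; eauto.
  -
    assert (Hhat : forall te0 we0, SymCall G trig Y te0 -> generates (CPS G trig) te0 we0 ->
              generates (CPS G trig) [Nt (Hat Y)] (w1 ++ we0)).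
    { intros te0 we0 Hs0 Hwe0.
      destruct (cps_rule_of_symcall _ _ _ Hs0 Hrhs) as (sg & Hcps & Hsg).
      eapply generates_nt; eauto. }
    rewrite <- app_assoc.
    destruct (prodcall_cons_inv _ _ _ _ _ Hpc)
      as (tau' & Hpc' & [[Hnt ->]|(Z & [= <-] & _ & -> & Hs)]).
    + change (hat_sym (Nt Y) :: tau') with ([Nt (Hat Y)] ++ tau').
      rewrite <- (app_nil_r w1) at 1. apply generates_app.
      * apply Hhat with []; [apply sc_root; exact Hnt | apply generates_nil].
      * eapply IH2; eauto.
    + apply Hhat with tau'; [exact Hs|]. eapply IH2; eauto.
Qed.

Definition sound_prod (m : nat) : Prop :=
  forall tau v, yields (CPS G trig) m tau v ->
  forall X p q te, ProdCall G trig X p q tau -> SymCall G trig X te ->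
  exists wq we, v = wq ++ we /\ generates (cfg_of G) q wq /\ yields (CPS G trig) m te we.

Definition sound_sym (m : nat) : Prop :=
  forall Y v te, yields (CPS G trig) m [Nt (Hat Y)] v -> SymCall G trig Y te ->
  exists w we, v = w ++ we /\ generates (cfg_of G) [Nt Y] w /\
    exists m', m' < m /\ yields (CPS G trig) m' te we.

Lemma sound_sym_of_prod m : (forall m', m' < m -> sound_prod m') -> sound_sym m.
Proof.
  intros IH Y v te Hv Hte.
  destruct (yields_nt_inv _ _ _ _ Hv) as (m0 & sg & -> & (X & post & [= <-] & Hpc) & Hsg).
  destruct (IH m0 (le_n (S m0)) _ _ Hsg _ _ _ _ Hpc Hte)
    as (wq & we & -> & Hwq & Hwe).
  exists wq, we. split; [reflexivity|]. split.
  - eapply generates_nt; [exact (prodcall_in _ _ _ _ Hpc)|exact Hwq].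
  - exists m0. auto.
Qed.

(** A non-triggering symbol is emitted as itself (hatted), with the empty
    continuation, so its CPS derivations are derivations in [G]. *)
Lemma sound_nontrig_symbol m a v : sound_sym m -> ~ trig_sym trig a ->
  yields (CPS G trig) m [hat_sym a] v -> generates (cfg_of G) [a] v.
Proof.
  intros Hsym Hnt Hv. destruct a as [b|Z]; simpl in Hv.
  - inversion Hv as [|? ? ? ? Hnil|]; subst. apply yields_nil_inv in Hnil; subst.
    apply generates_tm, generates_nil.
  - destruct (Hsym Z v [] Hv (sc_root _ _ _ Hnt)) as (w & we & -> & Hw & m' & _ & Hwe).
    apply yields_nil_inv in Hwe. subst. rewrite app_nil_r. exact Hw.
Qed.

Lemma sound_prod_of_sym m :
  sound_sym m -> (forall m', m' < m -> sound_prod m') -> sound_prod m.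
Proof.
  intros Hsym IH tau v Hv X p q te Hpc Hte. revert p tau v Hv Hpc.
  induction q as [|a q IHq]; intros p tau v Hv Hpc.
  - rewrite <- (symcall_functional X te tau Hte (prodcall_symcall _ _ _ Hpc)) in Hv.
    exists [], v. repeat split; auto using generates_nil.
  - destruct (prodcall_cons_inv _ _ _ _ _ Hpc)
      as (tau' & Hpc' & [[Hnt ->]|(Z & -> & _ & -> & Hs)]).
    + change (hat_sym a :: tau') with ([hat_sym a] ++ tau') in Hv.
      destruct (yields_app_inv _ _ _ _ _ Hv) as (va & v' & -> & Ha & Hv').
      destruct (IHq _ _ _ Hv' Hpc') as (wq & we & -> & Hwq & Hwe).
      exists (va ++ wq), we. rewrite app_assoc. repeat split; auto.
      apply (generates_app _ [a] va q wq); auto. eapply sound_nontrig_symbol; eauto.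
    + destruct (Hsym Z v tau' Hv Hs) as (wz & v' & -> & Hwz & m' & Hlt & Hv').
      destruct (IH m' Hlt _ _ Hv' _ _ _ _ Hpc' Hte) as (wq & we & -> & Hwq & Hwe).
      exists (wz ++ wq), we. rewrite app_assoc. repeat split.
      * apply (generates_app _ [Nt Z] wz q wq); auto.
      * eapply yields_mono; [exact Hwe | lia].
Qed.

Lemma cps_sound m : sound_prod m.
Proof.
  induction m as [m IH] using (well_founded_induction Wf_nat.lt_wf).
  apply sound_prod_of_sym; [apply sound_sym_of_prod|]; exact IH.
Qed.

Theorem cps_same_language X w : ~ trig X ->
  generates (cfg_of G) [Nt X] w <-> generates (CPS G trig) [Nt (Hat X)] w.
Proof.
  intros HX. pose proof (sc_root G trig X HX) as Hroot. split.
  - intros [n Hn]. destruct (yields_nt_inv _ _ _ _ Hn) as (m & rhs & _ & Hin & Hrhs).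
    destruct (cps_rule_of_symcall _ _ _ Hroot Hin) as (sg & Hcps & Hsg).
    apply generates_nt with sg; [exact Hcps|]. rewrite <- (app_nil_r w).
    eapply cps_complete; eauto using generates_nil.
  - intros [n Hn].
    destruct (sound_sym_of_prod n (fun m _ => cps_sound m) X w [] Hn Hroot)
      as (w' & we & -> & Hw' & m' & _ & Hwe).
    apply yields_nil_inv in Hwe. subst. rewrite app_nil_r. exact Hw'.
Qed.
End CPSCorrect.

Definition call_site {T N : Type} (ps : list (prod T N)) (k : nat) (X : nt N)
    (p q : list (symbol T (nt N))) : Prop :=
  In (X, p ++ Nt (Fresh k) :: q) ps /\ ~ (q = [] /\ Fresh k = X).

Definition sites_in {T N : Type} (ps : list (prod T N)) (R : nat -> Prop) : Prop :=
  (forall k X p q, call_site ps k X p q -> R k) /\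
  (forall k X1 p1 q1 X2 p2 q2, call_site ps k X1 p1 q1 -> call_site ps k X2 p2 q2 ->
     X1 = X2 /\ p1 = p2 /\ q1 = q2).

Section CallSites.
Context {T N : Type}.
Implicit Types (ps : list (prod T N)) (R : nat -> Prop).

Lemma call_site_app ps1 ps2 k X p q :
  call_site (ps1 ++ ps2) k X p q -> call_site ps1 k X p q \/ call_site ps2 k X p q.
Proof. intros [Hin Hs]. apply in_app_or in Hin as [Hin|Hin]; [left|right]; split; auto. Qed.

Lemma sites_weaken ps R R' : sites_in ps R -> (forall k, R k -> R' k) -> sites_in ps R'.
Proof. intros [Hr Hu] H; split; eauto. Qed.

Lemma sites_app ps1 ps2 R1 R2 :
  sites_in ps1 R1 -> sites_in ps2 R2 -> (forall k, R1 k -> R2 k -> False) ->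
  sites_in (ps1 ++ ps2) (fun k => R1 k \/ R2 k).
Proof.
  intros [Hr1 Hu1] [Hr2 Hu2] Hdisj. split.
  - intros k X p q H. destruct (call_site_app _ _ _ _ _ _ H); eauto.
  - intros k X1 p1 q1 X2 p2 q2 H1 H2.
    destruct (call_site_app _ _ _ _ _ _ H1) as [O1|O1];
      destruct (call_site_app _ _ _ _ _ _ H2) as [O2|O2]; eauto;
      exfalso; eapply Hdisj; eauto.
Qed.

Lemma sites_app_adjacent ps1 ps2 a b c : a <= b -> b <= c ->
  sites_in ps1 (fun k => a <= k < b) -> sites_in ps2 (fun k => b <= k < c) ->
  sites_in (ps1 ++ ps2) (fun k => a <= k < c).
Proof.
  intros Hab Hbc H1 H2. eapply sites_weaken.
  - apply (sites_app _ _ _ _ H1 H2). intros k Hk1 Hk2; lia.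
  - intros k Hk; cbv beta in Hk; lia.
Qed.

Lemma sites_none ps R : (forall k X p q, ~ call_site ps k X p q) -> sites_in ps R.
Proof. intros H; split; intros; exfalso; eapply H; eauto. Qed.

Lemma sites_plain (X : nt N) (rhs : list (symbol T (nt N))) R :
  (forall k, ~ In (Nt (Fresh k)) rhs) -> sites_in [(X, rhs)] R.
Proof.
  intros H. apply sites_none. intros k Y p q [[Hin|[]] _]. injection Hin as _ Hrhs.
  apply (H k). rewrite Hrhs. apply in_elt.
Qed.

(** The two productions [X -> Fresh n X | eps] emitted for a repetition
    have the single call site of [Fresh n] (the tail [X] is self-recursive). *)
Lemma sites_star (X : nt N) n :
  sites_in [(X, [@Nt T _ (Fresh n); Nt X]); (X, [])] (fun k => k = n).
Proof.
  assert (Hsite : forall k Y p q,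
            call_site [(X, [@Nt T _ (Fresh n); Nt X]); (X, [])] k Y p q ->
            k = n /\ Y = X /\ p = [] /\ q = [Nt X]).
  { intros k Y p q [[Hin|[Hin|[]]] Hs]; injection Hin as <- Hrhs.
    - destruct p as [|x [|y p]]; simpl in Hrhs; inversion Hrhs; subst.
      + auto.
      + exfalso; auto.
      + destruct p; discriminate.
    - destruct p; discriminate. }
  split.
  - intros k Y p q H. apply Hsite in H. tauto.
  - intros k X1 p1 q1 X2 p2 q2 H1 H2.
    destruct (Hsite _ _ _ _ H1) as (_ & -> & -> & ->).
    destruct (Hsite _ _ _ _ H2) as (_ & -> & -> & ->). auto.
Qed.

Definition fresh_rhs_ok (alphas : list (symbol T (nt N))) ps R : Prop :=
  forall p k q, alphas = p ++ Nt (Fresh k) :: q ->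
    R k /\ (forall X p' q', ~ call_site ps k X p' q') /\
    (forall p2 q2, alphas = p2 ++ Nt (Fresh k) :: q2 -> p = p2 /\ q = q2).

Lemma sites_with_rhs ps (X : nt N) alphas R :
  sites_in ps R -> fresh_rhs_ok alphas ps R -> sites_in (ps ++ [(X, alphas)]) R.
Proof.
  intros [Hr Hu] Hrhs.
  assert (Hnew : forall k Y p q, call_site [(X, alphas)] k Y p q ->
                   Y = X /\ alphas = p ++ Nt (Fresh k) :: q).
  { intros k Y p q [[Hin|[]] _]. injection Hin as -> ->. auto. }
  split.
  - intros k Y p q H. destruct (call_site_app _ _ _ _ _ _ H) as [H'|H']; [eauto|].
    destruct (Hnew _ _ _ _ H') as [_ E]. exact (proj1 (Hrhs _ _ _ E)).
  - intros k X1 p1 q1 X2 p2 q2 H1 H2.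
    destruct (call_site_app _ _ _ _ _ _ H1) as [O1|O1];
      destruct (call_site_app _ _ _ _ _ _ H2) as [O2|O2]; [eauto| | |].
    + destruct (Hnew _ _ _ _ O2) as [_ E].
      exfalso; eapply (proj1 (proj2 (Hrhs _ _ _ E))); eauto.
    + destruct (Hnew _ _ _ _ O1) as [_ E].
      exfalso; eapply (proj1 (proj2 (Hrhs _ _ _ E))); eauto.
    + destruct (Hnew _ _ _ _ O1) as [-> E1]. destruct (Hnew _ _ _ _ O2) as [-> E2].
      destruct (proj2 (proj2 (Hrhs _ _ _ E1)) _ _ E2) as [-> ->]. auto.
Qed.

Lemma fresh_rhs_cons_plain a alphas ps R : (forall k, a <> Nt (Fresh k)) ->
  fresh_rhs_ok alphas ps R -> fresh_rhs_ok (a :: alphas) ps R.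
Proof.
  intros Ha Hrhs [|x p] k q E; simpl in E; injection E as Ex E;
    [exfalso; exact (Ha k Ex)|subst x].
  destruct (Hrhs _ _ _ E) as (Hr & Hn & Hu). split; [exact Hr|]. split; [exact Hn|].
  intros [|y p'] q' E'; simpl in E'; injection E' as Ey E'; [exfalso; exact (Ha k Ey)|].
  destruct (Hu _ _ E') as [-> ->]. subst. auto.
Qed.

Lemma fresh_rhs_cons_fresh alphas ps1 ps2 n n1 n2 : S n <= n1 -> n1 <= n2 ->
  sites_in ps1 (fun k => S n <= k < n1) -> sites_in ps2 (fun k => n1 <= k < n2) ->
  fresh_rhs_ok alphas ps2 (fun k => n1 <= k < n2) ->
  fresh_rhs_ok (Nt (Fresh n) :: alphas) (ps1 ++ ps2) (fun k => n <= k < n2).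
Proof.
  intros L1 L2 [Hr1 _] [Hr2 _] Hrhs [|x p] k q E; simpl in E; injection E as Ex E.
  - subst k. split; [lia|]. split.
    + intros X p' q' H. destruct (call_site_app _ _ _ _ _ _ H) as [H'|H'].
      * apply Hr1 in H'; lia.
      * apply Hr2 in H'; lia.
    + intros [|y p'] q' E'; simpl in E'.
      * injection E' as E'. subst. auto.
      * injection E' as _ E'. destruct (proj1 (Hrhs _ _ _ E')). lia.
  - subst x. destruct (Hrhs _ _ _ E) as (Hr & Hn & Hu). split; [lia|]. split.
    + intros X p' q' H. destruct (call_site_app _ _ _ _ _ _ H) as [H'|H'].
      * apply Hr1 in H'; lia.
      * exact (Hn _ _ _ H').
    + intros [|y p'] q' E'; simpl in E'; injection E' as Ey E'.
      * subst k. lia.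
      * destruct (Hu _ _ E') as [-> ->]. subst. auto.
Qed.

End CallSites.

Definition expr_nested_ind {T N : Type} (P : expr T N -> Prop)
  (Hsym : forall s, P (ESym s)) (Hcat : forall es, Forall P es -> P (ECat es))
  (Halt : forall es, Forall P es -> P (EAlt es)) (Hopt : forall e, P e -> P (EOpt e))
  (Hstar : forall e, P e -> P (EStar e)) : forall e, P e :=
  fix F (e : expr T N) : P e :=
  match e with
  | ESym s => Hsym s
  | ECat es => Hcat es ((fix go (l : list (expr T N)) : Forall P l :=
      match l with [] => Forall_nil _ | x :: l' => Forall_cons _ (F x) (go l') end) es)
  | EAlt es => Halt es ((fix go (l : list (expr T N)) : Forall P l :=
      match l with [] => Forall_nil _ | x :: l' => Forall_cons _ (F x) (go l') end) es)
  | EOpt e1 => Hopt e1 (F e1)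
  | EStar e1 => Hstar e1 (F e1)
  end.

(** The local fixpoints of [flatten], as named functions. *)
Definition flatten_item {T N : Type} (e1 : expr T N) (n : nat)
    : symbol T (nt N) * list (prod T N) * nat :=
  match e1 with
  | ESym s => (lift_sym s, [], n)
  | _ => let '(ps, n1) := flatten (Fresh n) e1 (S n) in (Nt (Fresh n), ps, n1)
  end.

Definition flatten_items {T N : Type} :=
  fix flatten_items (es : list (expr T N)) (n : nat)
    : list (symbol T (nt N)) * list (prod T N) * nat :=
  match es with
  | [] => ([], [], n)
  | e1 :: es' =>
      let '(a, ps1, n1) := flatten_item e1 n in
      let '(as_, ps2, n2) := flatten_items es' n1 in
      (a :: as_, ps1 ++ ps2, n2)
  end.

Definition flatten_branches {T N : Type} (X : nt N) :=
  fix flatten_branches (es : list (expr T N)) (n : nat) : list (prod T N) * nat :=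
  match es with
  | [] => ([], n)
  | e1 :: es' =>
      let '(ps1, n1) := flatten X e1 n in
      let '(ps2, n2) := flatten_branches es' n1 in
      (ps1 ++ ps2, n2)
  end.

Lemma flatten_cat {T N : Type} (X : nt N) (es : list (expr T N)) n :
  flatten X (ECat es) n =
  (let '(alphas, ps, n') := flatten_items es n in (ps ++ [(X, alphas)], n')).
Proof. reflexivity. Qed.

Lemma flatten_alt {T N : Type} (X : nt N) (es : list (expr T N)) n :
  flatten X (EAlt es) n = flatten_branches X es n.
Proof. reflexivity. Qed.

Definition flatten_ok {T N : Type} (e : expr T N) : Prop :=
  forall X n ps n', flatten X e n = (ps, n') ->
  n <= n' /\ sites_in ps (fun k => n <= k < n').

Section FlattenSites.
Context {T N : Type}.

Lemma flatten_item_ok (e1 : expr T N) n a ps1 n1 :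
  flatten_ok e1 -> flatten_item e1 n = (a, ps1, n1) ->
  (ps1 = [] /\ n1 = n /\ forall k, a <> Nt (Fresh k)) \/
  (a = Nt (Fresh n) /\ S n <= n1 /\ sites_in ps1 (fun k => S n <= k < n1)).
Proof.
  intros Hok H. destruct e1 as [s| | | |]; unfold flatten_item in H;
    try (destruct (flatten (Fresh n) _ (S n)) as [ps n2] eqn:E;
         injection H as <- <- <-; right; destruct (Hok _ _ _ _ E); auto).
  injection H as <- <- <-. left. repeat split. intros k; destruct s; discriminate.
Qed.

Lemma flatten_items_ok (es : list (expr T N)) : Forall flatten_ok es ->
  forall n alphas ps n', flatten_items es n = (alphas, ps, n') ->
  n <= n' /\ sites_in ps (fun k => n <= k < n') /\
  fresh_rhs_ok alphas ps (fun k => n <= k < n').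
Proof.
  induction 1 as [|e1 es Hok1 Hoks IH]; intros n alphas ps n' H; simpl in H.
  - injection H as <- <- <-. split; [lia|]. split.
    + apply sites_none. intros k X p q [[] _].
    + intros p k q E. exfalso; exact (app_cons_not_nil _ _ _ E).
  - destruct (flatten_item e1 n) as [[a ps1] n1] eqn:E1.
    destruct (flatten_items es n1) as [[alphas2 ps2] n2] eqn:E2.
    injection H as <- <- <-. destruct (IH _ _ _ _ E2) as (L2 & Hs2 & Hr2).
    destruct (flatten_item_ok e1 n a ps1 n1 Hok1 E1) as [(-> & -> & Ha)|(-> & L1 & Hs1)].
    + split; [lia|]. split; [exact Hs2|]. exact (fresh_rhs_cons_plain _ _ _ _ Ha Hr2).
    + split; [lia|]. split.
      * apply sites_app_adjacent with n1; try lia; [|exact Hs2].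
        eapply sites_weaken; [exact Hs1|]. intros k Hk; cbv beta in Hk; lia.
      * exact (fresh_rhs_cons_fresh _ _ _ _ _ _ L1 L2 Hs1 Hs2 Hr2).
Qed.

Lemma flatten_branches_ok (X : nt N) (es : list (expr T N)) : Forall flatten_ok es ->
  forall n ps n', flatten_branches X es n = (ps, n') ->
  n <= n' /\ sites_in ps (fun k => n <= k < n').
Proof.
  induction 1 as [|e1 es Hok1 Hoks IH]; intros n ps n' H; simpl in H.
  - injection H as <- <-. split; [lia|]. apply sites_none. intros k Y p q [[] _].
  - destruct (flatten X e1 n) as [ps1 n1] eqn:E1.
    destruct (flatten_branches X es n1) as [ps2 n2] eqn:E2.
    injection H as <- <-.
    destruct (Hok1 _ _ _ _ E1) as [L1 Hs1]. destruct (IH _ _ _ E2) as [L2 Hs2].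
    split; [lia|]. apply sites_app_adjacent with n1; auto.
Qed.

Lemma flatten_sites (e : expr T N) : flatten_ok e.
Proof.
  induction e as [s|es Hes|es Hes|e IH|e IH] using expr_nested_ind;
    intros X n ps n' H.
  - injection H as <- <-. split; [lia|]. apply sites_plain.
    intros k [Hk|[]]. destruct s; discriminate.
  - rewrite flatten_cat in H. destruct (flatten_items es n) as [[alphas ps0] n0] eqn:E.
    injection H as <- <-. destruct (flatten_items_ok es Hes _ _ _ _ E) as (L & Hs & Hr).
    split; [exact L|]. apply sites_with_rhs; assumption.
  - rewrite flatten_alt in H. exact (flatten_branches_ok X es Hes _ _ _ H).
  - simpl in H. destruct (flatten X e n) as [ps1 n1] eqn:E. injection H as <- <-.
    destruct (IH _ _ _ _ E) as [L Hs]. split; [exact L|].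
    apply sites_app_adjacent with n1; auto. apply sites_plain. intros k [].
  - simpl in H. destruct (flatten (Fresh n) e (S n)) as [ps1 n1] eqn:E.
    injection H as <- <-. destruct (IH _ _ _ _ E) as [L Hs]. split; [lia|].
    eapply sites_weaken; [apply (sites_app _ _ _ _ Hs (sites_star X n))|].
    + intros k Hk1 Hk2; lia.
    + intros k Hk; cbv beta in Hk; lia.
Qed.

Lemma flatten_rules_sites (rules : list (N * expr T N)) n ps n' :
  flatten_rules rules n = (ps, n') -> n <= n' /\ sites_in ps (fun k => n <= k < n').
Proof.
  revert n ps n'. induction rules as [|[X e] rs IH]; intros n ps n' H; simpl in H.
  - injection H as <- <-. split; [lia|]. apply sites_none. intros k Y p q [[] _].
  - destruct (flatten (Top X) e n) as [ps1 n1] eqn:E1.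
    destruct (flatten_rules rs n1) as [ps2 n2] eqn:E2.
    injection H as <- <-.
    destruct (flatten_sites e _ _ _ _ E1) as [L1 Hs1]. destruct (IH _ _ _ E2) as [L2 Hs2].
    split; [lia|]. apply sites_app_adjacent with n1; auto.
Qed.

Lemma flattened_unique_call_sites (rules : list (N * expr T N)) (trig : nt N -> Prop) :
  (forall Y, trig Y -> cps_eligible rules Y) -> unique_call_sites (flattened rules) trig.
Proof.
  intros Htrig Y X1 p1 q1 X2 p2 q2 HY H1 H2 S1 S2.
  destruct (Htrig _ HY) as (k & -> & _).
  unfold flattened in *. destruct (flatten_rules rules 0) as [ps n'] eqn:E.
  destruct (flatten_rules_sites rules _ _ _ E) as [_ [_ Hu]].
  eapply Hu; split; eauto.
Qed.

End FlattenSites.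

(** The start symbol is top-level, hence non-triggering, so parts 2 and 3
    give the equality of the two languages. *)
Theorem mainTheorem3 (T N : Type) (rules : list (N * expr T N)) (S : N)
  (trig : nt N -> Prop) :
  In S (map fst rules) ->
  (forall Y, trig Y -> cps_eligible rules Y) ->
  forall w : list T,
    derives (flat_cfg rules) [Nt (Top S)] (map Tm w) <->
    derives (CPS (flattened rules) trig) [Nt (Hat (Top S))] (map Tm w).
Proof.
  intros _ Htrig w.
  assert (Hstart : ~ trig (Top S)).
  { intros H. destruct (Htrig _ H) as (k & Hk & _). discriminate. }
  rewrite (derives_iff_generates (flat_cfg rules)), derives_iff_generates.
  exact (cps_same_language _ _ (flattened_unique_call_sites rules trig Htrig) (Top S) w Hstart).
Qed.
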